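(* For every propositional formula $\pi$ that is neither a tautology nor a contradiction, the formula $\langle\ddagger\pi\rangle\top \land [\ddagger\pi](\lnot\Box\pi\land\lnot\Box\lnot\pi)$ is true at every world of every serial model (a model whose relation $R$ satisfies: every world has at least one $R$-successor).
   Context: Fix a countable non-empty set $\mathit{At}$ of atoms. Formulas are built from $\top$, atoms, $\lnot$, $\land$, $\Box$ and, for each propositional formula $\pi$, the operator $[\ddagger\pi]$ (''after forgetting whether $\pi$''); $\langle\ddagger\pi\rangle\varphi:=\lnot[\ddagger\pi]\lnot\varphi$, other connectives as usual. A model is $\mathcal{M}=\langle W,R,V\rangle$ with $W\neq\varnothing$, $R\subseteq W\times W$, $V:\mathit{At}\to\mathcal{P}(W)$; standard Kripke semantics for $\Box$. A literal is an atom or its negation; a clause is a finite set $D$ of literals read as $\bigvee D$ ($\bigvee\varnothing:=\bot$), tautological if it contains $p$ and $\lnot p$ for some $p$. For propositional $\pi$, $\mathcal{C}(\pi)$ is the set of non-tautological clauses $D$ with $\models\pi\to\bigvee D$ and no $D'\subsetneq D$ with $\models\pi\to\bigvee D'$. For a model $\mathcal{M}$ and a finite family $(D_i)_{i\in I}$ of non-tautological clauses, $0\notin I$, the model $\mathcal{M}^{(D_i)_{i\in I}}_u=\langle W',R',V'\rangle$ has $W'=W\times(\{0\}\cup I)$, $(w,i)R'(v,j)$ iff $wRv$, $(w,0)\in V'(p)$ iff $w\in V(p)$, and for $i\in I$: $(w,i)\in V'(p)$ iff $\lnot p\in D_i$, or $\{p,\lnot p\}\cap D_i=\varnothing$ and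 $w\in V(p)$. $\mathcal{M},w\models[\ddagger\pi]\varphi$ iff for all $D_1\in\mathcal{C}(\pi)$ and $D_2\in\mathcal{C}(\lnot\pi)$, $\mathcal{M}^{(D_1,D_2)}_u,(w,0)\models\varphi$. *)

From Stdlib Require Import List.
Import ListNotations.
Set Implicit Arguments.

Section Syntax.
Variable At : Type.

Inductive pform : Type :=
| PTop : pform
| PAtom : At -> pform
| PNot : pform -> pform
| PAnd : pform -> pform -> pform.

Inductive form : Type :=
| FTop : form
| FAtom : At -> form
| FNot : form -> form
| FAnd : form -> form -> form
| FBox : form -> form
| FForget : pform -> form -> form.

Fixpoint emb (p : pform) : form :=
  match p with
  | PTop => FTop
  | PAtom a => FAtom a
  | PNot q => FNot (emb q)
  | PAnd q r => FAnd (emb q) (emb r)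
  end.

Definition FDiaForget (pi : pform) (phi : form) : form :=
  FNot (FForget pi (FNot phi)).

Fixpoint peval (v : At -> bool) (p : pform) : Prop :=
  match p with
  | PTop => True
  | PAtom a => v a = true
  | PNot q => ~ peval v q
  | PAnd q r => peval v q /\ peval v r
  end.

Definition tautology (p : pform) : Prop := forall v, peval v p.
Definition contradiction (p : pform) : Prop := forall v, ~ peval v p.

(* literals and clauses; a clause is a finite set of literals, represented
   by a list (only membership matters) *)
Inductive literal : Type :=
| Pos : At -> literal
| Neg : At -> literal.

Definition lit_true (v : At -> bool) (l : literal) : Prop :=
  match l with
  | Pos a => v a = true
  | Neg a => v a = false
  end.

Definition clause := list literal.

Definition tautological (D : clause) : Prop :=
  exists p, In (Pos p) D /\ In (Neg p) D.

Definition entails_clause (p : pform) (D : clause) : Prop :=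
  forall v, peval v p -> exists l, In l D /\ lit_true v l.

Definition strict_subclause (D' D : clause) : Prop :=
  (forall l, In l D' -> In l D) /\ (exists l, In l D /\ ~ In l D').

Definition inC (p : pform) (D : clause) : Prop :=
  ~ tautological D /\ entails_clause p D /\
  ~ (exists D', strict_subclause D' D /\ entails_clause p D').

(* index set {0} ∪ I with I = {1,2} *)
Inductive idx : Type := I0 | I1 | I2.

Definition upd_R (W : Type) (R : W -> W -> Prop) : W * idx -> W * idx -> Prop :=
  fun x y => R (fst x) (fst y).

Definition upd_val_clause (W : Type) (V : At -> W -> Prop) (D : clause)
  (p : At) (w : W) : Prop :=
  In (Neg p) D \/ ((~ In (Pos p) D /\ ~ In (Neg p) D) /\ V p w).

Definition upd_V (W : Type) (V : At -> W -> Prop) (D1 D2 : clause)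
  : At -> W * idx -> Prop :=
  fun p x =>
    match snd x with
    | I0 => V p (fst x)
    | I1 => upd_val_clause V D1 p (fst x)
    | I2 => upd_val_clause V D2 p (fst x)
    end.

Fixpoint sat (f : form) (W : Type) (R : W -> W -> Prop) (V : At -> W -> Prop)
  (w : W) {struct f} : Prop :=
  match f with
  | FTop => True
  | FAtom a => V a w
  | FNot g => ~ sat g R V w
  | FAnd g h => sat g R V w /\ sat h R V w
  | FBox g => forall u, R w u -> sat g R V u
  | FForget pi g =>
      forall D1 D2, inC pi D1 -> inC (PNot pi) D2 ->
        sat g (upd_R R) (upd_V V D1 D2) (w, I0)
  end.

Definition serial (W : Type) (R : W -> W -> Prop) : Prop :=
  forall w, exists u, R w u.

End Syntax.

Arguments PTop {At}.
Arguments FTop {At}.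
Definition countable (T : Type) : Prop := exists f : T -> nat, forall x y, f x = f y -> x = y.

(* Forgetting whether pi replaces the current world by three copies: the original
   one and two copies whose valuations are overwritten so as to falsify a clause
   D1 in C(pi), resp. a clause D2 in C(~pi).  Since pi entails D1, pi fails in the
   first copy of every successor, and since ~pi entails D2, pi holds in the second
   copy; seriality provides a successor.  The diamond conjunct only needs C(pi) and
   C(~pi) to be nonempty: the clause of literals over the atoms of pi falsified by
   a valuation refuting pi is entailed by pi, and shrinking it yields a minimal
   one. *)
From Stdlib Require Import List Classical ClassicalEpsilon Lia.
Import ListNotations.
Set Implicit Arguments.

Lemma filter_length_lt (A : Type) (f : A -> bool) (l : list A) (y : A) :
  In y l -> f y = false -> length (filter f l) < length l.
Proof.
  intros Hy Hfy.
  assert (Hneg : In y (filter (fun x => negb (f x)) l)).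
  { apply filter_In; rewrite Hfy; auto. }
  destruct (filter (fun x => negb (f x)) l) eqn:E; [contradiction|].
  pose proof (filter_length f l) as Hlen; rewrite E in Hlen; simpl in Hlen; lia.
Qed.

Definition truth (P : Prop) : bool :=
  if excluded_middle_informative P then true else false.

Lemma truthP (P : Prop) : truth P = true <-> P.
Proof.
  unfold truth; destruct (excluded_middle_informative P); split; auto; discriminate.
Qed.

Section Clauses.
Variable At : Type.
Implicit Types (p : pform At) (D : clause At) (v : At -> bool).

Fixpoint atoms p : list At :=
  match p with
  | PTop => []
  | PAtom a => [a]
  | PNot q => atoms q
  | PAnd q r => atoms q ++ atoms r
  end.

Lemma peval_ext_atoms p u v :
  (forall a, In a (atoms p) -> u a = v a) -> (peval u p <-> peval v p).
Proof.
  induction p as [|a|q IHq|q IHq r IHr]; simpl; intros Huv.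
  - tauto.
  - rewrite Huv; auto; tauto.
  - rewrite IHq; auto; tauto.
  - rewrite IHq, IHr by (intros; apply Huv, in_or_app; auto); tauto.
Qed.

Lemma tautological_incl D' D : incl D' D -> ~ tautological D -> ~ tautological D'.
Proof. intros Hsub HD [a [Hp Hn]]; apply HD; exists a; auto. Qed.

Lemma entails_clause_ext p D D' :
  (forall l, In l D <-> In l D') -> entails_clause p D -> entails_clause p D'.
Proof.
  intros Heq HD v Hv; destruct (HD v Hv) as [l [Hl Ht]]; exists l; rewrite <- Heq; auto.
Qed.

Lemma inC_of_entails_clause p D :
  ~ tautological D -> entails_clause p D -> exists E, inC p E.
Proof.
  remember (length D) as n eqn:En; revert D En.
  induction n as [n IH] using (well_founded_induction Wf_nat.lt_wf).
  intros D -> HT HD.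
  destruct (classic (exists D', strict_subclause D' D /\ entails_clause p D'))
    as [[D' [[Hsub [l [Hl Hl']]] HD']] | Hmin].
  - (* [D'] may be longer than [D] as a list, so recurse on its trace on [D] *)
    set (D'' := filter (fun k => truth (In k D')) D).
    assert (Hmem : forall k, In k D' <-> In k D'').
    { intros k; unfold D''; rewrite filter_In, truthP; split; [auto|tauto]. }
    apply (IH (length D'')) with D''; auto.
    + apply filter_length_lt with l; auto.
      unfold truth; destruct (excluded_middle_informative (In l D')); tauto.
    + apply tautological_incl with D; auto.
      intros k Hk; unfold D'' in Hk; apply filter_In in Hk; tauto.
    + eapply entails_clause_ext; [exact Hmem | exact HD'].
  - exists D; repeat split; auto.
Qed.

Definition falsified_literal v (a : At) : literal At :=
  if v a then Neg a else Pos a.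

Lemma falsified_clause_not_tautological v (s : list At) :
  ~ tautological (map (falsified_literal v) s).
Proof.
  intros [a [Hp Hn]]; apply in_map_iff in Hp as [b [Eb _]], Hn as [c [Ec _]].
  unfold falsified_literal in *.
  destruct (v b) eqn:Vb, (v c) eqn:Vc; try discriminate.
  injection Eb; injection Ec; intros; subst; congruence.
Qed.

Lemma entails_falsified_clause p v :
  ~ peval v p -> entails_clause p (map (falsified_literal v) (atoms p)).
Proof.
  intros Hv u Hu; apply NNPP; intros Hno; apply Hv.
  apply (peval_ext_atoms p v u); auto.
  intros a Ha; destruct (v a) eqn:Va, (u a) eqn:Ua; auto; exfalso; apply Hno;
    exists (falsified_literal v a); split; try apply in_map; auto;
    unfold falsified_literal; rewrite Va; simpl; auto.
Qed.

Lemma inC_nonempty p : ~ tautology p -> exists D, inC p D.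
Proof.
  intros Hnt; apply not_all_ex_not in Hnt as [v Hv].
  apply inC_of_entails_clause with (map (falsified_literal v) (atoms p)).
  - apply falsified_clause_not_tautological.
  - apply entails_falsified_clause; exact Hv.
Qed.

Lemma sat_emb (W : Type) (R : W -> W -> Prop) (V : At -> W -> Prop) (x : W) p :
  sat (emb p) R V x <-> peval (fun a => truth (V a x)) p.
Proof.
  induction p as [| a | q IHq | q IHq r IHr]; simpl.
  - tauto.
  - rewrite truthP; tauto.
  - rewrite IHq; tauto.
  - rewrite IHq, IHr; tauto.
Qed.

Lemma upd_val_clause_falsifies (W : Type) (V : At -> W -> Prop) D (x : W) l :
  ~ tautological D -> In l D -> ~ lit_true (fun a => truth (upd_val_clause V D a x)) l.
Proof.
  intros HT Hl; destruct l as [a|a]; simpl.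
  - rewrite truthP; intros [Hn | [[Hp _] _]]; auto.
    apply HT; exists a; auto.
  - intros Hf; assert (Ht : truth (upd_val_clause V D a x) = true).
    { apply truthP; left; auto. }
    congruence.
Qed.

Lemma inC_refuted_after_update (W : Type) (V : At -> W -> Prop) p D (x : W) :
  inC p D -> ~ peval (fun a => truth (upd_val_clause V D a x)) p.
Proof.
  intros [HT [HD _]] Hp; destruct (HD _ Hp) as [l [Hl Ht]].
  exact (upd_val_clause_falsifies V x l HT Hl Ht).
Qed.

End Clauses.

Theorem corollary1 (At : Type) (HAtc : countable At) (HAtne : inhabited At)
  (pi : pform At) (Hnt : ~ tautology pi) (Hnc : ~ contradiction pi)
  (W : Type) (HW : inhabited W) (R : W -> W -> Prop) (V : At -> W -> Prop)
  (Hser : serial R) (w : W) :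
  sat (FAnd (FDiaForget pi FTop)
            (FForget pi (FAnd (FNot (FBox (emb pi)))
                              (FNot (FBox (FNot (emb pi)))))))
      R V w.
Proof.
  simpl; split.
  - intros Hbox.
    destruct (inC_nonempty Hnt) as [D1 H1].
    destruct (inC_nonempty (p := PNot pi) Hnc) as [D2 H2].
    exact (Hbox D1 D2 H1 H2 I).
  - intros D1 D2 H1 H2; destruct (Hser w) as [u Hu]; split.
    + intros Hbox; specialize (Hbox (u, I1) Hu).
      rewrite sat_emb in Hbox.
      exact (inC_refuted_after_update V u H1 Hbox).
    + intros Hbox; apply (Hbox (u, I2) Hu); rewrite sat_emb.
      apply NNPP; exact (inC_refuted_after_update V u H2).
Qed.
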